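(* In the setting of the context, let $J_1,J_2$ be the compatible pair of Poisson vector fields $J_i=\alpha_i(\widehat e_2+\mu_i\widehat e_3)$ on an open set $U$ with respect to which $\dot x=v(x)$ is locally bi-Hamiltonian, as in the context, and let $\phi=\alpha_1\alpha_2(\mu_2-\mu_1)/\Vert v\Vert$. Let $\boldsymbol J_i$ be the 1-forms metrically dual to $J_i$ and let $\boldsymbol\beta$ be the 1-form with $d\boldsymbol J_i=\boldsymbol\beta\wedge\boldsymbol J_i$ for $i=1,2$ (it exists and is unique since $\boldsymbol J_1\wedge\boldsymbol J_2\neq0$ and the pair is compatible). Then $$\iota_{\widehat e_1}\boldsymbol\beta=\iota_{\widehat e_1}\big(d\ln|\phi|\big).$$
   Context: Setting: $M$ is an oriented three-dimensional manifold with Riemannian metric $g$; $\nabla$, $\nabla\times$, $\times$ denote gradient, curl and cross product. A Poisson vector field is $J$ with $J\cdot(\nabla\times J)=0$; compatible means $J_1+J_2$ is also Poisson. $v$ is nowhere vanishing, $\widehat e_1=v/\Vert v\Vert$ extended to a local oriented orthonormal frame $(\widehat e_1,\widehat e_2,\widehat e_3)$, $\widehat e_3=\widehat e_1\times\widehat e_2$, with $[\widehat e_i,\widehat e_j]=C_{ij}^k\widehat e_k$. The pair is given by nowhere-equal solutions $\mu_1,\mu_2$ of $\widehat e_1\cdot\nabla\mu=-C_{31}^{2}-\mu(C_{31}^{3}+C_{12}^{2})-\mu^{2}C_{12}^{3}$ and nowhere-vanishing $\alpha_1,\alpha_2$ with $\widehat e_1\cdot\nabla\ln|\alpha_i/\Vert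 v\Vert|=C_{31}^{3}+\mu_iC_{12}^{3}$; there are local functions $H_1,H_2$ with $v=J_1\times\nabla H_2=J_2\times\nabla H_1$. *)

(* Local frame calculus on an open set U of an oriented
   Riemannian 3-manifold, expressed in the oriented orthonormal frame
   (e_1,e_2,e_3) with [e_i,e_j] = C_ij^k e_k.  The ring R plays the role of
   the (smooth) functions on U; e i is the derivation f |-> e_i . grad f. *)
From HB Require Import structures.
From mathcomp Require Import all_boot all_order all_algebra.
Set Implicit Arguments. Unset Strict Implicit. Unset Printing Implicit Defensive.
Import Order.TTheory GRing.Theory Num.Theory.
Local Open Scope ring_scope.

Definition I1 : 'I_3 := @Ordinal 3 0 isT.
Definition I2 : 'I_3 := @Ordinal 3 1 isT.
Definition I3 : 'I_3 := @Ordinal 3 2 isT.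

(* vector fields / 1-forms on U, via their components in the orthonormal
   frame (for an orthonormal frame the metric dual has the same components) *)
Definition vec3 (R : Type) := 'I_3 -> R.

Definition mk3 (R : Type) (a b c : R) : vec3 R :=
  fun k => match val k with 0%N => a | 1%N => b | _ => c end.

Definition is_derivation (R : comUnitRingType) (D : R -> R) : Prop :=
  (forall f g, D (f + g) = D f + D g) /\ (forall f g, D (f * g) = D f * g + f * D g).

Definition frame_bracket (R : comUnitRingType) (e : 'I_3 -> R -> R)
  (C : 'I_3 -> 'I_3 -> 'I_3 -> R) : Prop :=
  forall i j f, e i (e j f) - e j (e i f) = \sum_(k < 3) C i j k * e k f.

Definition frame_indep (R : comUnitRingType) (e : 'I_3 -> R -> R) : Prop :=
  forall a : 'I_3 -> R, (forall f, \sum_(k < 3) a k * e k f = 0) -> forall k, a k = 0.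

Definition grad (R : comUnitRingType) (e : 'I_3 -> R -> R) (f : R) : vec3 R :=
  fun k => e k f.

Definition dot (R : comUnitRingType) (X Y : vec3 R) : R := \sum_(k < 3) X k * Y k.

Definition vadd3 (R : comUnitRingType) (X Y : vec3 R) : vec3 R := fun k => X k + Y k.

Definition cross (R : comUnitRingType) (X Y : vec3 R) : vec3 R :=
  mk3 (X I2 * Y I3 - X I3 * Y I2) (X I3 * Y I1 - X I1 * Y I3) (X I1 * Y I2 - X I2 * Y I1).

Definition d1 (R : comUnitRingType) (e : 'I_3 -> R -> R)
  (C : 'I_3 -> 'I_3 -> 'I_3 -> R) (w : vec3 R) (i j : 'I_3) : R :=
  e i (w j) - e j (w i) - \sum_(k < 3) C i j k * w k.

Definition wedge11 (R : comUnitRingType) (b w : vec3 R) (i j : 'I_3) : R :=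
  b i * w j - b j * w i.

(* curl J = ( * d J^flat )^sharp in the oriented orthonormal frame *)
Definition curl (R : comUnitRingType) (e : 'I_3 -> R -> R)
  (C : 'I_3 -> 'I_3 -> 'I_3 -> R) (J : vec3 R) : vec3 R :=
  mk3 (d1 e C J I2 I3) (d1 e C J I3 I1) (d1 e C J I1 I2).

Definition poisson (R : comUnitRingType) (e : 'I_3 -> R -> R)
  (C : 'I_3 -> 'I_3 -> 'I_3 -> R) (J : vec3 R) : Prop :=
  dot J (curl e C J) = 0.

Definition Jfield (R : comUnitRingType) (alpha mu : R) : vec3 R :=
  mk3 0 alpha (alpha * mu).

(* Both sides are logarithmic derivatives along e_1.  Evaluating d J_1 = beta /\ J_1
   on (e_1, e_2) gives beta(e_1) = e_1 ln|alpha_1| - C_12^2 - mu_1 C_12^3.  On the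
   other side, the Riccati equation for mu_1, mu_2 gives
   e_1 ln|mu_2 - mu_1| = -(C_31^3 + C_12^2) - (mu_1 + mu_2) C_12^3, and adding the
   transport equation for alpha_2 / ||v|| leaves exactly the same expression. *)
From HB Require Import structures.
From mathcomp Require Import all_boot all_order all_algebra.
From mathcomp Require Import ring.
Set Implicit Arguments. Unset Strict Implicit. Unset Printing Implicit Defensive.
Import Order.TTheory GRing.Theory Num.Theory.
Local Open Scope ring_scope.

Definition logder (R : comUnitRingType) (D : R -> R) (x : R) : R := D x / x.

Section Derivation.
Variables (R : comUnitRingType) (D : R -> R).
Hypothesis derD : is_derivation D.

Lemma derivation0 : D 0 = 0.
Proof.
have [Dadd _] := derD.
by apply: (addrI (D 0)); rewrite -Dadd !addr0.
Qed.

Lemma derivation1 : D 1 = 0.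
Proof.
have [_ Dmul] := derD.
have := Dmul 1 1; rewrite !mulr1 mul1r => D1.
by apply: (addrI (D 1)); rewrite -D1 addr0.
Qed.

Lemma derivationB x y : D (x - y) = D x - D y.
Proof.
have [Dadd _] := derD.
apply: (addIr (D y)); rewrite -Dadd subrK; ring.
Qed.

Lemma logderM x y : x \is a GRing.unit -> y \is a GRing.unit ->
  logder D (x * y) = logder D x + logder D y.
Proof.
move=> ux uy; have [_ Dmul] := derD.
rewrite /logder Dmul invrM //.
transitivity (D x / x * (y / y) + D y / y * (x / x)); first ring.
by rewrite !mulrV // !mulr1.
Qed.

Lemma logderV x : x \is a GRing.unit -> logder D x^-1 = - logder D x.
Proof.
move=> ux; apply: (addrI (logder D x)).
by rewrite -logderM ?unitrV // mulrV // addrN /logder derivation1 mul0r.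
Qed.

(* For two solutions of the Riccati equation D mu = - c0 - mu c1 - mu^2 c2, the
   constant term c0 cancels in their difference. *)
Lemma logder_riccati_diff c0 c1 c2 mu1 mu2 :
  (mu2 - mu1) \is a GRing.unit ->
  D mu1 = - c0 - mu1 * c1 - mu1 ^+ 2 * c2 ->
  D mu2 = - c0 - mu2 * c1 - mu2 ^+ 2 * c2 ->
  logder D (mu2 - mu1) = - c1 - (mu1 + mu2) * c2.
Proof.
move=> udm Dmu1 Dmu2; rewrite /logder derivationB Dmu1 Dmu2.
transitivity ((- c1 - (mu1 + mu2) * c2) * ((mu2 - mu1) / (mu2 - mu1))); first ring.
by rewrite mulrV // mulr1.
Qed.

End Derivation.

Lemma sum_ord3 (R : comUnitRingType) (F : 'I_3 -> R) :
  \sum_(k < 3) F k = F I1 + F I2 + F I3.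
Proof.
rewrite !big_ord_recl big_ord0 addr0 addrA.
by congr (F _ + F _ + F _); apply: val_inj.
Qed.

Lemma dual_form_Jfield_e1 (R : comUnitRingType) (e : 'I_3 -> R -> R)
    (C : 'I_3 -> 'I_3 -> 'I_3 -> R) (a mu : R) (beta : vec3 R) :
  is_derivation (e I2) -> a \is a GRing.unit ->
  d1 e C (Jfield a mu) I1 I2 = wedge11 beta (Jfield a mu) I1 I2 ->
  beta I1 = logder (e I1) a - C I1 I2 I2 - mu * C I1 I2 I3.
Proof.
move=> derI2 ua.
rewrite /d1 /wedge11 sum_ord3 /Jfield /mk3 /= derivation0 // => dJ.
transitivity ((beta I1 * a - beta I2 * 0) / a); first by rewrite mulr0 subr0 mulrK.
rewrite -dJ /logder.
transitivity (e I1 a / a - (C I1 I2 I2 + mu * C I1 I2 I3) * (a / a)); first ring.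
by rewrite mulrV // mulr1 opprD addrA.
Qed.

Theorem lemma2 (R : comUnitRingType) (e : 'I_3 -> R -> R)
  (C : 'I_3 -> 'I_3 -> 'I_3 -> R)
  (nv mu1 mu2 a1 a2 H1 H2 : R) (beta : vec3 R) :
  (forall i, is_derivation (e i)) ->
  frame_bracket e C ->
  frame_indep e ->
  nv \is a GRing.unit ->
  a1 \is a GRing.unit ->
  a2 \is a GRing.unit ->
  (mu2 - mu1) \is a GRing.unit ->
  (forall mu, mu = mu1 \/ mu = mu2 ->
     e I1 mu = - C I3 I1 I2 - mu * (C I3 I1 I3 + C I1 I2 I2) - mu ^+ 2 * C I1 I2 I3) ->
  e I1 (a1 / nv) / (a1 / nv) = C I3 I1 I3 + mu1 * C I1 I2 I3 ->
  e I1 (a2 / nv) / (a2 / nv) = C I3 I1 I3 + mu2 * C I1 I2 I3 ->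
  poisson e C (Jfield a1 mu1) ->
  poisson e C (Jfield a2 mu2) ->
  poisson e C (vadd3 (Jfield a1 mu1) (Jfield a2 mu2)) ->
  (forall k, mk3 nv 0 0 k = cross (Jfield a1 mu1) (grad e H2) k) ->
  (forall k, mk3 nv 0 0 k = cross (Jfield a2 mu2) (grad e H1) k) ->
  (forall i j, d1 e C (Jfield a1 mu1) i j = wedge11 beta (Jfield a1 mu1) i j) ->
  (forall i j, d1 e C (Jfield a2 mu2) i j = wedge11 beta (Jfield a2 mu2) i j) ->
  let phi := a1 * a2 * (mu2 - mu1) / nv in
  beta I1 = e I1 phi / phi.
Proof.
move=> der _ _ unv ua1 ua2 udm Dmu _ transport2 _ _ _ _ _ dJ1 _ phi.
have ua2nv : a2 / nv \is a GRing.unit by rewrite unitrM ua2 unitrV.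
have logder_dm := logder_riccati_diff (der I1) udm
  (Dmu mu1 (or_introl erefl)) (Dmu mu2 (or_intror erefl)).
have -> : e I1 phi / phi = logder (e I1) (a1 * (a2 / nv) * (mu2 - mu1)).
  by rewrite /logder /phi; congr (e I1 _ / _); ring.
have ua12 : a1 * (a2 / nv) \is a GRing.unit by rewrite unitrM ua1.
rewrite (logderM (der I1) ua12 udm) (logderM (der I1) ua1 ua2nv).
rewrite logder_dm [logder _ (a2 / nv)]transport2.
rewrite (dual_form_Jfield_e1 (der I2) ua1 (dJ1 I1 I2)); ring.
Qed.
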